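(* In a combinatorial auction with single-dimensional signals and SOS valuations, fix a true signal profile $\mathbf{s}$ (reported truthfully) and a welfare-maximizing allocation $T^*=(T_i^* )_i$ at $\mathbf{s}$. Then the expected welfare $\mathbb{E}[\sum_i v_{i\tilde T_i}(\mathbf{s})]$ of the Random Sampling mechanism is at least $\frac14\mathsf{OTHER}$, where $\mathsf{OTHER}=\sum_i v_{iT_i^*}(\mathbf{s}_{-i},0_i)$.
   Context: Setting: $n$ agents, $m$ items; agent $i$ has private signal $s_i\ge0$; her value for bundle $T$ is $v_{iT}(\mathbf{s})\ge0$, public, weakly increasing in each coordinate, strictly in $s_i$; each $v_{iT}$ is SOS: for every coordinate $j$, $s_j$, $\delta\ge0$, and $\mathbf{s}'_{-j}\le\mathbf{s}_{-j}$ coordinate-wise, $v(\mathbf{s}'_{-j},s_j+\delta)-v(\mathbf{s}'_{-j},s_j)\ge v(\mathbf{s}_{-j},s_j+\delta)-v(\mathbf{s}_{-j},s_j)$. $(\mathbf{s}_{-i},0_i)$ is $\mathbf{s}$ with $s_i$ set to $0$. Random Sampling (on reports $\mathbf{s}$): split agents uniformly at random into $A,B$; for $i\in B$ let $\tilde v_{iT}=v_{iT}(\mathbf{s}_A,\mathbf{0}_B)$ (all signals of $B$, including $i$'s own, set to $0$), for $i\in A$ let $\tilde v_{iT}=0$; choose $\tilde T\in\arg\max\sum_{i\in B}\tilde v_{i\tilde T_i}$ over allocations to agents of $B$; no payments. *)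

From HB Require Import structures.
From mathcomp Require Import all_boot all_order all_algebra.
Set Implicit Arguments. Unset Strict Implicit. Unset Printing Implicit Defensive.
Import Order.TTheory GRing.Theory Num.Theory.
Local Open Scope ring_scope.

Definition profile (R : realFieldType) (n : nat) := 'I_n -> R.

(* valuations: v i T s = v_{iT}(s) *)
Definition valuations (R : realFieldType) (n m : nat) :=
  'I_n -> {set 'I_m} -> profile R n -> R.

Definition nonneg_profile (R : realFieldType) n (s : profile R n) :=
  forall j, 0 <= s j.

Definition le_profile (R : realFieldType) n (s s' : profile R n) :=
  forall j, s j <= s' j.

Definition upd (R : realFieldType) n (s : profile R n) (j : 'I_n) (x : R)
  : profile R n := fun k => if k == j then x else s k.

Definition zero_on (R : realFieldType) n (B : {set 'I_n}) (s : profile R n)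
  : profile R n := fun k => if k \in B then 0 else s k.

Definition val_nonneg (R : realFieldType) n m (v : valuations R n m) :=
  forall i T s, nonneg_profile s -> 0 <= v i T s.

Definition val_monotone (R : realFieldType) n m (v : valuations R n m) :=
  forall i T s s', nonneg_profile s -> le_profile s s' -> v i T s <= v i T s'.

Definition val_strict_own (R : realFieldType) n m (v : valuations R n m) :=
  forall i T s x, nonneg_profile s -> s i < x -> v i T s < v i T (upd s i x).

Definition SOS (R : realFieldType) n (f : profile R n -> R) :=
  forall (j : 'I_n) (s s' : profile R n) (delta : R),
    nonneg_profile s' -> le_profile s' s -> 0 <= delta ->
    f (upd s j (s j + delta)) - f (upd s j (s j))
      <= f (upd s' j (s j + delta)) - f (upd s' j (s j)).

Definition val_SOS (R : realFieldType) n m (v : valuations R n m) :=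
  forall i T, SOS (v i T).

(* An allocation: pairwise disjoint bundles (items may stay unallocated). *)
Definition allocation n m (T : 'I_n -> {set 'I_m}) :=
  forall i j, i != j -> [disjoint T i & T j].

Definition allocation_to n m (B : {set 'I_n}) (T : 'I_n -> {set 'I_m}) :=
  allocation T /\ forall i, i \notin B -> T i = set0.

Definition welfare (R : realFieldType) n m (v : valuations R n m)
  (T : 'I_n -> {set 'I_m}) (s : profile R n) : R :=
  \sum_(i < n) v i (T i) s.

(* Welfare of the bidders of B under the Random Sampling estimates
   ~v_{iT} = v_{iT}(s_A, 0_B) for i in B (and 0 for i in A). *)
Definition rs_est_welfare (R : realFieldType) n m (v : valuations R n m)
  (B : {set 'I_n}) (T : 'I_n -> {set 'I_m}) (s : profile R n) : R :=
  \sum_(i < n | i \in B) v i (T i) (zero_on B s).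

Definition welfare_max (R : realFieldType) n m (v : valuations R n m)
  (T : 'I_n -> {set 'I_m}) (s : profile R n) :=
  allocation T /\ forall T', allocation T' -> welfare v T' s <= welfare v T s.

(* Tt is a valid outcome of Random Sampling for partition (A = ~:B, B) *)
Definition rs_choice (R : realFieldType) n m (v : valuations R n m)
  (B : {set 'I_n}) (T : 'I_n -> {set 'I_m}) (s : profile R n) :=
  allocation_to B T /\
  forall T', allocation_to B T' -> rs_est_welfare v B T' s <= rs_est_welfare v B T s.

Definition OTHER (R : realFieldType) n m (v : valuations R n m)
  (Tstar : 'I_n -> {set 'I_m}) (s : profile R n) : R :=
  \sum_(i < n) v i (Tstar i) (upd s i 0).

(* Expected welfare of Random Sampling: B uniform over all 2^n subsets
   (each agent independently in A or B w.p. 1/2), Tt B the chosen allocation. *)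
Definition rs_expected_welfare (R : realFieldType) n m (v : valuations R n m)
  (Tt : {set 'I_n} -> 'I_n -> {set 'I_m}) (s : profile R n) : R :=
  (\sum_(B : {set 'I_n}) welfare v (Tt B) s) / (2 ^+ n).

From HB Require Import structures.
From mathcomp Require Import all_boot all_order all_algebra.
From Stdlib Require Import FunctionalExtensionality.
From mathcomp Require Import lra.
Import Order.TTheory GRing.Theory Num.Theory.
Set Implicit Arguments. Unset Strict Implicit. Unset Printing Implicit Defensive.
Local Open Scope ring_scope.

(* Write [restrict s K] for the profile keeping the signals of K and zeroing
   the others.  For a fixed SOS function f of the profile:
   - the marginal gain of adding an agent's signal shrinks as more signals are
     present (SOS), hence f is subadditive over disjoint groups of signals:
     f(U u W) - f(U) <= f(W) - f(0);
   - splitting the agents other than i along any K and its complement gives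
     f(s_{-i}, 0_i) <= f(K \ i) + f(~K \ i); averaging over the 2^n sets K
     yields 2^n f(s_{-i}, 0_i) <= 4 * sum_{K not containing i} f(restrict s K).
   On the mechanism side, for each split (A, B) the chosen allocation is at
   least as good, for the estimated values, as T* restricted to B, and the
   estimates underestimate true values; so the welfare for B is at least
   sum_{i in B} v_{iT*_i}(s_A, 0_B).  Summing over B and exchanging sums
   (B = ~K) reduces the theorem to the per-agent averaging bound. *)

Lemma card_subsets (T : finType) : (#|{set T}| = 2 ^ #|T|)%N.
Proof. by rewrite -cardsT -card_powerset; apply: eq_card => B; rewrite !inE subsetT. Qed.

Section Restriction.
Variables (R : realFieldType) (n : nat).
Implicit Types (s : profile R n) (K L : {set 'I_n}).

Definition restrict s K : profile R n := zero_on (~: K) s.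

Lemma restrictE s K k : restrict s K k = if k \in K then s k else 0.
Proof. by rewrite /restrict /zero_on inE; case: (k \in K). Qed.

Lemma restrict_nonneg s K : nonneg_profile s -> nonneg_profile (restrict s K).
Proof. by move=> hs k; rewrite restrictE; case: ifP. Qed.

Lemma restrict_le s K L :
  nonneg_profile s -> K \subset L -> le_profile (restrict s K) (restrict s L).
Proof.
move=> hs sKL k; rewrite !restrictE; case: ifP => [/(subsetP sKL)->|] //.
by case: ifP.
Qed.

Lemma restrict_out s K j : j \notin K -> restrict s K j = 0.
Proof. by move=> hj; rewrite restrictE (negbTE hj). Qed.

Lemma upd_id s j : upd s j (s j) = s.
Proof. by apply: functional_extensionality => k; rewrite /upd; case: eqP => // ->. Qed.

Lemma upd_restrict_add s K j :
  j \notin K -> upd (restrict s K) j (s j) = restrict s (j |: K).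
Proof.
move=> hj; apply: functional_extensionality => k.
by rewrite /upd !restrictE !inE; case: eqP => [->|].
Qed.

Lemma upd_restrict_zero s K j : j \notin K -> upd (restrict s K) j 0 = restrict s K.
Proof. by move=> hj; rewrite -[in upd _ _ 0](restrict_out s hj) upd_id. Qed.

Lemma restrict_setC1 s i : restrict s (~: [set i]) = upd s i 0.
Proof.
by apply: functional_extensionality => k; rewrite restrictE /upd !inE; case: eqP.
Qed.

End Restriction.

Section Subadditivity.
Variables (R : realFieldType) (n : nat) (f : profile R n -> R) (s : profile R n).
Hypotheses (f_SOS : SOS f) (s_nonneg : nonneg_profile s).

Lemma SOS_marginal_decreasing (K L : {set 'I_n}) (j : 'I_n) :
  K \subset L -> j \notin L ->
  f (restrict s (j |: L)) - f (restrict s L)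
    <= f (restrict s (j |: K)) - f (restrict s K).
Proof.
move=> sKL jL; have jK : j \notin K by apply: contra jL; apply: subsetP.
have := f_SOS j (restrict_nonneg _ s_nonneg) (restrict_le s_nonneg sKL) (s_nonneg j).
rewrite (restrict_out s jL) add0r.
by rewrite !upd_restrict_add // !upd_restrict_zero.
Qed.

Lemma SOS_subadditive (U W : {set 'I_n}) :
  [disjoint U & W] ->
  f (restrict s (U :|: W)) - f (restrict s U)
    <= f (restrict s W) - f (restrict s set0).
Proof.
have [k] := ubnP #|W|; elim: k W => // k IH W cardW dUW.
have [->|[j jW]] := set_0Vmem W; first by rewrite setU0 !subrr.
set W0 := W :\ j.
have jW0 : j \notin W0 by rewrite !inE eqxx.
have dUW0 : [disjoint U & W0] by apply: disjointWr dUW; rewrite subD1set.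
have jUW0 : j \notin U :|: W0 by rewrite inE negb_or jW0 (disjointFl dUW jW).
have step := SOS_marginal_decreasing (subsetUr U W0) jUW0.
have IHW0 : f (restrict s (U :|: W0)) - f (restrict s U)
    <= f (restrict s W0) - f (restrict s set0).
  by apply: IH dUW0; rewrite (cardsD1 j W) jW add1n ltnS in cardW.
have -> : W = j |: W0 by rewrite setD1K.
by rewrite setUCA; lra.
Qed.

Lemma zero_own_le_split (i : 'I_n) (K : {set 'I_n}) :
  (forall x, nonneg_profile x -> 0 <= f x) ->
  f (upd s i 0) <= f (restrict s (K :\ i)) + f (restrict s (~: K :\ i)).
Proof.
move=> f_nonneg.
have dK : [disjoint K :\ i & ~: K :\ i].
  rewrite -setI_eq0; apply/eqP/setP => x.
  by rewrite !inE; case: (x \in K); rewrite ?andbF.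
have := SOS_subadditive dK.
have -> : K :\ i :|: ~: K :\ i = ~: [set i].
  by apply/setP => x; rewrite !inE; case: (x \in K); rewrite ?andbT ?andbF ?orbF.
have := f_nonneg _ (restrict_nonneg set0 s_nonneg).
by rewrite restrict_setC1; lra.
Qed.

End Subadditivity.

Lemma sum_subsets_setD1 (T : finType) (V : nmodType) (g : {set T} -> V) (i : T) :
  \sum_(K : {set T}) g (K :\ i) = (\sum_(K : {set T} | i \notin K) g K) *+ 2.
Proof.
rewrite (bigID (fun K : {set T} => i \in K)) /= mulr2n; congr (_ + _); last first.
  apply: eq_bigr => K iK; congr g.
  by apply/setP => x; rewrite !inE; case: eqP => // ->; rewrite (negbTE iK).
rewrite (reindex_onto (fun K => i |: K) (fun K => K :\ i)) /=; last exact: setD1K.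
apply: eq_big => [K|K /andP[_ /eqP ->]] //.
rewrite setU11 /=; apply/eqP/idP => [<-|]; first by rewrite !inE eqxx.
exact: setU1K.
Qed.

Lemma zero_own_le_average (R : realFieldType) n (f : profile R n -> R)
    (s : profile R n) (i : 'I_n) :
  SOS f -> nonneg_profile s -> (forall x, nonneg_profile x -> 0 <= f x) ->
  f (upd s i 0) * 2 ^+ n
    <= 4%:R * \sum_(K : {set 'I_n} | i \notin K) f (restrict s K).
Proof.
move=> f_SOS s_nonneg f_nonneg.
have sum_split : f (upd s i 0) * 2 ^+ n
    <= \sum_(K : {set 'I_n}) f (restrict s (K :\ i))
       + \sum_(K : {set 'I_n}) f (restrict s (~: K :\ i)).
  rewrite -big_split /= -[2 ^+ n]natrX -[n in (2 ^ n)%N](card_ord n).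
  rewrite -card_subsets mulr_natr -sumr_const.
  by apply: ler_sum => K _; apply: zero_own_le_split.
have sum_compl : \sum_(K : {set 'I_n}) f (restrict s (~: K :\ i))
    = \sum_(K : {set 'I_n}) f (restrict s (K :\ i)).
  by rewrite (reindex_inj (@setC_inj _)); apply: eq_bigr => K _; rewrite setCK.
rewrite sum_compl (sum_subsets_setD1 (fun K => f (restrict s K))) in sum_split.
by apply: (le_trans sum_split); rewrite -mulrnDr mulr_natl.
Qed.

Section RandomSampling.
Variables (R : realFieldType) (n m : nat) (v : valuations R n m) (s : profile R n).
Hypotheses (v_nonneg : val_nonneg v) (v_monotone : val_monotone v)
  (s_nonneg : nonneg_profile s).

(* The estimates of Random Sampling never exceed true values: zeroing the
   signals of B lowers the profile. *)
Lemma rs_est_welfare_le_welfare (B : {set 'I_n}) (T : 'I_n -> {set 'I_m}) :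
  rs_est_welfare v B T s <= welfare v T s.
Proof.
have zB_nonneg : nonneg_profile (zero_on B s) by move=> k; rewrite /zero_on; case: ifP.
have zB_le : le_profile (zero_on B s) s by move=> k; rewrite /zero_on; case: ifP.
rewrite /welfare (bigID (fun i => i \in B)) /= -[X in X <= _]addr0.
apply: lerD; first by apply: ler_sum => i _; apply: v_monotone.
by apply: sumr_ge0 => i _; apply: v_nonneg.
Qed.

Lemma allocation_restrict (B : {set 'I_n}) (T : 'I_n -> {set 'I_m}) :
  allocation T -> allocation_to B (fun i => if i \in B then T i else set0).
Proof.
move=> T_alloc; split=> [i j ij|i /negbTE-> //].
case: (i \in B); case: (j \in B); first exact: T_alloc.
all: by rewrite -setI_eq0 ?setI0 ?set0I.
Qed.

Lemma rs_choice_welfare_lower_bound (B : {set 'I_n})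
    (Tstar T : 'I_n -> {set 'I_m}) :
  allocation Tstar -> rs_choice v B T s ->
  \sum_(i < n | i \in B) v i (Tstar i) (zero_on B s) <= welfare v T s.
Proof.
move=> Tstar_alloc [_ T_opt]; apply: le_trans (rs_est_welfare_le_welfare B T).
apply: le_trans (T_opt _ (allocation_restrict B Tstar_alloc)).
rewrite /rs_est_welfare.
by rewrite [X in _ <= X](eq_bigr (fun i => v i (Tstar i) (zero_on B s))) // => i ->.
Qed.

End RandomSampling.

(* Reindexing the samples by their complements K = ~: B: agent i is in the
   sample B exactly when it is absent from the kept signals K. *)
Lemma sum_samples_by_kept (R : realFieldType) n (s : profile R n)
    (h : 'I_n -> profile R n -> R) :
  \sum_(B : {set 'I_n}) \sum_(i < n | i \in B) h i (zero_on B s)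
    = \sum_(i < n) \sum_(K : {set 'I_n} | i \notin K) h i (restrict s K).
Proof.
under eq_bigr do rewrite big_mkcond.
rewrite exchange_big /=; apply: eq_bigr => i _.
rewrite [RHS]big_mkcond (reindex_inj (@setC_inj _)) /=.
by apply: eq_bigr => K _; rewrite /restrict inE if_neg.
Qed.

Theorem mainTheorem7 (R : realFieldType) (n m : nat) (v : valuations R n m)
  (s : profile R n) (Tstar : 'I_n -> {set 'I_m})
  (Tt : {set 'I_n} -> 'I_n -> {set 'I_m}) :
  val_nonneg v -> val_monotone v -> val_strict_own v -> val_SOS v ->
  nonneg_profile s ->
  welfare_max v Tstar s ->
  (forall B : {set 'I_n}, rs_choice v B (Tt B) s) ->
  OTHER v Tstar s / 4%:R <= rs_expected_welfare v Tt s.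
Proof.
move=> v_nonneg v_monotone _ v_SOS s_nonneg [Tstar_alloc _] Tt_choice.
set kept := \sum_(i < n) \sum_(K : {set 'I_n} | i \notin K)
              v i (Tstar i) (restrict s K).
have kept_le_welfare : kept <= \sum_(B : {set 'I_n}) welfare v (Tt B) s.
  rewrite /kept -(sum_samples_by_kept s (fun i => v i (Tstar i))).
  by apply: ler_sum => B _; apply: rs_choice_welfare_lower_bound.
have OTHER_le_kept : OTHER v Tstar s * 2 ^+ n <= 4%:R * kept.
  rewrite /OTHER mulr_suml mulr_sumr; apply: ler_sum => i _.
  by apply: zero_own_le_average => // x x_nonneg; apply: v_nonneg.
have pow2_gt0 : (0 : R) < 2 ^+ n by apply: exprn_gt0.
rewrite /rs_expected_welfare ler_pdivlMr // mulrAC ler_pdivrMr //.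
lra.
Qed.
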